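(* Let $\gamma\ge7/5$ and consider the SIEMS5 method ($\mathrm{k}=5$) with coefficients defined as in the context. Then $\sigma_{\mathrm{F}}=1$, $$\sigma_{\mathrm{E}}=\frac{15(16\gamma^4+32\gamma^3-24\gamma^2+8\gamma-1)}{16(15\gamma^4-15\gamma^2+10\gamma-2)},\quad\lambda_{\mathrm{I}}=\frac{15(2\gamma-1)^4}{16(15\gamma^4-15\gamma^2+10\gamma-2)},$$ so that $\mathfrak{I}_{\mathrm{IE}}=\dfrac{(2\gamma-1)^4}{16\gamma^4+32\gamma^3-24\gamma^2+8\gamma-1}$.
   Context: The $\gamma$-parameterized SIEMS-$\mathrm{k}$ method has coefficients $a_j$ ($0\le j\le\mathrm{k}-1$), $b_j$ ($0\le j\le\mathrm{k}$), $c_j$ ($0\le j\le\mathrm{k}-1$) determined by the polynomial identities (in $\zeta$) $\sum_{j=0}^{\mathrm{k}-1}a_j\zeta^{\mathrm{k}-j-1}=\sum_{j=1}^{\mathrm{k}}\frac{f^{(j)}(1)}{j!}(\zeta-1)^{j-1}$ with $f(z)=(\gamma z-\gamma+1)^{\mathrm{k}-1}z\ln z$; $\sum_{j=0}^{\mathrm{k}}b_j\zeta^{\mathrm{k}-j}=\zeta(\gamma\zeta-\gamma+1)^{\mathrm{k}-1}$; $\sum_{j=0}^{\mathrm{k}-1}c_j\zeta^{\mathrm{k}-j-1}=\zeta(\gamma\zeta-\gamma+1)^{\mathrm{k}-1}-\gamma^{\mathrm{k}-1}(\zeta-1)^{\mathrm{k}}$. (For $\mathrm{k}=5$: $(a_0,\dots,a_4)=(\gamma^4+2\gamma^3-\gamma^2+\tfrac{\gamma}{3}-\tfrac1{20},\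 -4\gamma^4-4\gamma^3+7\gamma^2-2\gamma+\tfrac{17}{60},\ 6\gamma^4-9\gamma^2+6\gamma-\tfrac{43}{60},\ -4\gamma^4+4\gamma^3+\gamma^2-\tfrac{10\gamma}{3}+\tfrac{77}{60},\ \gamma^4-2\gamma^3+2\gamma^2-\gamma+\tfrac15)$.) Define $a(\theta)=\sum_j a_je^{\imath j\theta}$, $b(\theta)=\sum_j b_je^{\imath j\theta}$, $c(\theta)=\sum_jc_je^{\imath j\theta}$, $\sigma_{\mathrm{F}}=\max_{\theta\in[0,2\pi)}|1/a(\theta)|$, $\sigma_{\mathrm{E}}=\max_{\theta\in[0,2\pi)}|c(\theta)/a(\theta)|$, $\lambda_{\mathrm{I}}=\min_{\theta\in[0,2\pi)}\Re[b(\theta)/a(\theta)]$, $\mathfrak{I}_{\mathrm{IE}}=\lambda_{\mathrm{I}}/\sigma_{\mathrm{E}}$. *)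

From Stdlib Require Import Reals.
From Coquelicot Require Import Coquelicot.
From mathcomp Require Import all_boot all_algebra.
From mathcomp Require Import Rstruct.

Set Implicit Arguments. Unset Strict Implicit. Unset Printing Implicit Defensive.

Definition siems_a (g : R) (j : nat) : R :=
  match j with
  | 0%nat => (g^4 + 2*g^3 - g^2 + g/3 - 1/20)%R
  | 1%nat => (-4*g^4 - 4*g^3 + 7*g^2 - 2*g + 17/60)%R
  | 2%nat => (6*g^4 - 9*g^2 + 6*g - 43/60)%R
  | 3%nat => (-4*g^4 + 4*g^3 + g^2 - 10*g/3 + 77/60)%R
  | 4%nat => (g^4 - 2*g^3 + 2*g^2 - g + 1/5)%R
  | _ => 0%R
  end.

Local Open Scope ring_scope.
Definition siems_bpoly (g : R) : {poly R} :=
  'X * (g *: 'X - (g - 1)%:P) ^+ 4.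
Definition siems_cpoly (g : R) : {poly R} :=
  siems_bpoly g - (g ^+ 4) *: ('X - 1) ^+ 5.
Definition siems_b (g : R) (j : nat) : R := (siems_bpoly g)`_(5 - j).
Definition siems_c (g : R) (j : nat) : R := (siems_cpoly g)`_(4 - j).
Local Close Scope ring_scope.

Open Scope R_scope.

Definition expi (t : R) : C := (cos t, sin t).

Definition a_fun (g t : R) : C :=
  sum_n (fun j => RtoC (siems_a g j) * expi (INR j * t))%C 4.
Definition b_fun (g t : R) : C :=
  sum_n (fun j => RtoC (siems_b g j) * expi (INR j * t))%C 5.
Definition c_fun (g t : R) : C :=
  sum_n (fun j => RtoC (siems_c g j) * expi (INR j * t))%C 4.

Definition is_max_on_circle (f : R -> R) (M : R) : Prop :=
  (exists t, 0 <= t < 2 * PI /\ f t = M) /\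
  (forall t, 0 <= t < 2 * PI -> f t <= M).
Definition is_min_on_circle (f : R -> R) (m : R) : Prop :=
  (exists t, 0 <= t < 2 * PI /\ f t = m) /\
  (forall t, 0 <= t < 2 * PI -> m <= f t).

From Stdlib Require Import Reals Lra.
From Coquelicot Require Import Coquelicot.
From mathcomp Require Import all_boot all_algebra.
From mathcomp Require Import Rstruct.
From mathcomp Require ring.
Open Scope R_scope.

(* With [c = cos t], [e^(i j t) = T_j(c) + i sin t U_(j-1)(c)], so [|a(t)|^2],
   [|c(t)|^2] and [Re (b(t) conj(a(t)))] are polynomials in [c], and the claims
   reduce to [|a|^2 >= 1], [|c|^2 <= sigma_E^2 |a|^2] and
   [Re (b conj(a)) >= lambda_I |a|^2] for [-1 <= c <= 1] and [g >= 7/5].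
   Each difference is [1 - c] (resp. [1 + c]) times a polynomial that becomes
   visibly nonnegative after substituting [g = 7/5 + u] and [c = 2 y - 1]; the
   vanishing factor shows the bounds are attained at [t = 0] (resp. [t = PI]). *)

(* [chebyshev n c = (T_n(c), U_(n-1)(c))] *)
Fixpoint chebyshev (n : nat) (c : R) : R * R :=
  match n with
  | 0%nat => (1, 0)
  | S m => let (T, U) := chebyshev m c in (c * T - (1 - c^2) * U, T + c * U)
  end.

Lemma sin_pow2 t : sin t ^ 2 = 1 - cos t ^ 2.
Proof. rewrite -(sin2_cos2 t) /Rsqr; ring. Qed.

Lemma expi_chebyshev n t :
  expi (INR n * t) = (fst (chebyshev n (cos t)), sin t * snd (chebyshev n (cos t))).
Proof.
rewrite /expi; elim: n => [|n IH].
  by rewrite /= Rmult_0_l cos_0 sin_0 Rmult_0_r.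
rewrite S_INR Rmult_plus_distr_r Rmult_1_l cos_plus sin_plus /=.
case: (chebyshev n (cos t)) IH => T U [-> ->] /=.
by congr pair; rewrite -?sin_pow2; ring.
Qed.

Definition trig_sum (f : nat -> R) (n : nat) (t : R) : C :=
  sum_n (fun j => RtoC (f j) * expi (INR j * t))%C n.
Definition circle_re (f : nat -> R) (n : nat) (c : R) : R :=
  sum_n (fun j => f j * fst (chebyshev j c)) n.
Definition circle_im (f : nat -> R) (n : nat) (c : R) : R :=
  sum_n (fun j => f j * snd (chebyshev j c)) n.

Lemma trig_sum_chebyshev f n t :
  trig_sum f n t = (circle_re f n (cos t), sin t * circle_im f n (cos t)).
Proof.
rewrite /trig_sum /circle_re /circle_im; elim: n => [|n IH].
  by rewrite !sum_O expi_chebyshev /RtoC /Cmult /=; congr pair; ring.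
rewrite !sum_Sn IH expi_chebyshev /RtoC /Cmult /plus /=.
by congr pair; rewrite /Cplus /=; ring.
Qed.

Definition circle_norm2 (f : nat -> R) (n : nat) (c : R) : R :=
  circle_re f n c ^ 2 + (1 - c^2) * circle_im f n c ^ 2.
Definition circle_dot (f : nat -> R) (m : nat) (h : nat -> R) (n : nat) (c : R) : R :=
  circle_re f m c * circle_re h n c + (1 - c^2) * circle_im f m c * circle_im h n c.

Lemma Cmod_trig_sum f n t : Cmod (trig_sum f n t) = sqrt (circle_norm2 f n (cos t)).
Proof.
rewrite trig_sum_chebyshev /Cmod /circle_norm2 /=; congr sqrt.
rewrite -sin_pow2; ring.
Qed.

Lemma Re_div_trig_sum f m h n t :
  Re (trig_sum f m t / trig_sum h n t)%C = circle_dot f m h n (cos t) / circle_norm2 h n (cos t).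
Proof.
rewrite !trig_sum_chebyshev /Re /Cdiv /Cmult /Cinv; cbn [fst snd].
have -> : forall y, (sin t * y) ^ 2 = (1 - cos t ^ 2) * y ^ 2.
  by move=> y; rewrite Rpow_mult_distr sin_pow2.
rewrite /circle_dot /circle_norm2 /Rdiv -sin_pow2; ring.
Qed.

(* [siems_a] is written with MathComp's ring operations (and integer powers) on
   [R]; this is the same table with the standard-library ones. *)
Definition siems_a_expanded (g : R) (j : nat) : R :=
  match j with
  | 0%nat => g^4 + 2*g^3 - g^2 + g/3 - 1/20
  | 1%nat => -4*g^4 - 4*g^3 + 7*g^2 - 2*g + 17/60
  | 2%nat => 6*g^4 - 9*g^2 + 6*g - 43/60
  | 3%nat => -4*g^4 + 4*g^3 + g^2 - 10*g/3 + 77/60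
  | 4%nat => g^4 - 2*g^3 + 2*g^2 - g + 1/5
  | _ => 0
  end.

Definition siems_b_expanded (g : R) (j : nat) : R :=
  match j with
  | 0%nat => g^4
  | 1%nat => 4 * g^3 * (1 - g)
  | 2%nat => 6 * g^2 * (1 - g)^2
  | 3%nat => 4 * g * (1 - g)^3
  | 4%nat => (1 - g)^4
  | _ => 0
  end.

Definition siems_c_expanded (g : R) (j : nat) : R :=
  match j with
  | 0%nat => 4 * g^3 * (1 - g) + 5 * g^4
  | 1%nat => 6 * g^2 * (1 - g)^2 - 10 * g^4
  | 2%nat => 4 * g * (1 - g)^3 + 10 * g^4
  | 3%nat => (1 - g)^4 - 5 * g^4
  | 4%nat => g^4
  | _ => 0
  end.

Section ReversedCoefficients.
Import ring GRing.Theory.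
Local Open Scope ring_scope.

Lemma coef_reversed_sum (S : nzSemiRingType) (n : nat) (a : nat -> S) (i : nat) :
  (i <= n)%N -> (\sum_(j < n.+1) a j *: 'X^(n - j))`_(n - i) = a i.
Proof.
move=> le_in; rewrite coef_sumMXn.
rewrite (eq_bigl (fun j : 'I_n.+1 => val j == i)) ?big_ord1_eq ?ltnS ?le_in // => j.
by rewrite eqn_sub2lE // -ltnS.
Qed.

Lemma siems_bpoly_reversed (g : R) :
  siems_bpoly g = \sum_(j < 6) siems_b_expanded g j *: 'X^(5 - j).
Proof.
rewrite /siems_bpoly !big_ord_recr big_ord0 /= -!mul_polyC !RealsE /=.
ring.
Qed.

Lemma siems_cpoly_reversed (g : R) :
  siems_cpoly g = \sum_(j < 5) siems_c_expanded g j *: 'X^(4 - j).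
Proof.
rewrite /siems_cpoly /siems_bpoly !big_ord_recr big_ord0 /= -!mul_polyC !RealsE /=.
ring.
Qed.

Lemma siems_aE (g : R) (j : nat) : siems_a g j = siems_a_expanded g j.
Proof.
by case: j => [|[|[|[|[|j]]]]]; rewrite /siems_a /siems_a_expanded ?IZR_NEG ?RealsE /=; field.
Qed.

(* Beyond these bounds on [j], [5 - j] and [4 - j] truncate to [0]. *)
Lemma siems_bE (g : R) (j : nat) : (j <= 5)%N -> siems_b g j = siems_b_expanded g j.
Proof. by move=> le_j5; rewrite /siems_b siems_bpoly_reversed coef_reversed_sum. Qed.

Lemma siems_cE (g : R) (j : nat) : (j <= 4)%N -> siems_c g j = siems_c_expanded g j.
Proof. by move=> le_j4; rewrite /siems_c siems_cpoly_reversed coef_reversed_sum. Qed.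
End ReversedCoefficients.

Definition siems_den (g : R) : R := 16 * (15*g^4 - 15*g^2 + 10*g - 2).
Definition sigmaE_num (g : R) : R := 16*g^4 + 32*g^3 - 24*g^2 + 8*g - 1.
Definition sigmaE (g : R) : R := 15 * sigmaE_num g / siems_den g.
Definition lambdaI (g : R) : R := 15 * (2*g - 1)^4 / siems_den g.

(* Each certificate is a polynomial in [u = g - 7/5] and [y = (1 + c) / 2],
   written in the Bernstein basis in [y] with coefficients that are polynomials
   in [u] with positive coefficients; so it is nonnegative for [u >= 0] and
   [0 <= y <= 1]. *)
Definition sigmaF_certificate (u y : R) : R :=
  ((718707231/781250) + (1422749696/234375)*u + (2446214144/140625)*u^2
    + (264393728/9375)*u^3 + (10568576/375)*u^4 + (6633472/375)*u^5 + (169216/25)*u^6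
    + (7168/5)*u^7 + 128*u^8) * (1-y)^7
  + 7 * ((25000731841/49218750) + (5600096984/1640625)*u + (9749383576/984375)*u^2
         + (1062050912/65625)*u^3 + (42611504/2625)*u^4 + (26745088/2625)*u^5
         + (97152/25)*u^6 + (4096/5)*u^7 + (512/7)*u^8) * y * (1-y)^6
  + 21 * ((5076322457/21093750) + (2735606992/1640625)*u + (14568572864/2953125)*u^2
          + (535295456/65625)*u^3 + (7197584/875)*u^4 + (13548544/2625)*u^5
          + (1028096/525)*u^6 + (2048/5)*u^7 + (256/7)*u^8) * y^2 * (1-y)^5
  + 35 * ((21529683841/246093750) + (754954712/1171875)*u + (9705863576/4921875)*u^2
          + (155844416/46875)*u^3 + (44369504/13125)*u^4 + (3971584/1875)*u^5
          + (696064/875)*u^6 + (4096/25)*u^7 + (512/35)*u^8) * y^3 * (1-y)^4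
  + 35 * ((4398022429/246093750) + (1276222496/8203125)*u + (2507902144/4921875)*u^2
          + (292017728/328125)*u^3 + (12025376/13125)*u^4 + (7478272/13125)*u^5
          + (182016/875)*u^6 + (1024/25)*u^7 + (128/35)*u^8) * y^4 * (1-y)^3
  + 21 * ((7329011/5906250) + (289192/21875)*u + (831976/23625)*u^2 + (29216/525)*u^3
          + (5456/105)*u^4 + (2816/105)*u^5 + (128/21)*u^6) * y^5 * (1-y)^2
  + 7 * ((553069/78750) + (25296/875)*u + (20096/525)*u^2 + (864/35)*u^3
         + (48/7)*u^4) * y^6 * (1-y)
  + ((697/150) + (72/5)*u + 8*u^2) * y^7.
Definition sigmaE_certificate (u y : R) : R :=
  ((820385385374233/19531250) + (1943759417199376/1953125)*u + (2931938312549328/390625)*u^2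
    + (2354518391299968/78125)*u^3 + (239641072407392/3125)*u^4 + (419285441953664/3125)*u^5
    + (105237204370176/625)*u^6 + (19331541708288/125)*u^7 + (2610638791808/25)*u^8
    + 51322617856*u^9 + 17862803456*u^10 + 4167966720*u^11 + 583372800*u^12 + 36864000*u^13) * (1-y)^3
  + 3 * ((322081888625483/11718750) + (306700413346952/1171875)*u
         + (52882162042856/46875)*u^2 + (27225796670464/9375)*u^3 + (3097781340768/625)*u^4
         + (11030521473664/1875)*u^5 + (1855722358912/375)*u^6 + (44175630848/15)*u^7
         + (3637492352/3)*u^8 + 327915520*u^9 + 52213760*u^10 + 3686400*u^11) * y * (1-y)^2
  + 3 * ((844847256929/156250) + (623529260864/15625)*u + (406686989488/3125)*u^2
         + (153631413856/625)*u^3 + (110947787696/375)*u^4 + (5870603136/25)*u^5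
         + (612781952/5)*u^6 + 40400384*u^7 + 7591040*u^8 + 614400*u^9) * y^2 * (1-y)
  + ((7594048053/6250) + (3961993704/625)*u + (1759391576/125)*u^2 + (85954656/5)*u^3
     + 12424848*u^4 + 5284992*u^5 + 1215360*u^6 + 115200*u^7) * y^3.
Definition lambdaI_certificate (u y : R) : R :=
  ((199772973/156250) + (1476638748/15625)*u + (2164378716/3125)*u^2 + (1449262672/625)*u^3
    + (562495904/125)*u^4 + (137608832/25)*u^5 + (65070592/15)*u^6 + 2149888*u^7
    + 612480*u^8 + 76800*u^9) * (1-y)^3
  + 3 * ((142246061/31250) + (322382924/9375)*u + (208534876/1875)*u^2 + (44928208/225)*u^3
         + (9675664/45)*u^4 + (2083712/15)*u^5 + (149632/3)*u^6 + 7680*u^7) * y * (1-y)^2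
  + 3 * ((3770687/3750) + (236204/45)*u + (164612/15)*u^2 + 11504*u^3 + (18160/3)*u^4
         + 1280*u^5) * y^2 * (1-y)
  + ((12153/50) + (3556/5)*u + 708*u^2 + 240*u^3) * y^3.

Ltac nonneg_monomials :=
  repeat first [ assumption | apply pow_le | apply Rplus_le_le_0_compat
               | apply Rmult_le_pos | lra ].

Section Certificates.
Variables (u y : R).
Hypotheses (u_ge0 : 0 <= u) (y_ge0 : 0 <= y) (y_le1 : y <= 1).

Lemma sigmaF_certificate_ge0 : 0 <= sigmaF_certificate u y.
Proof. have one_sub_y_ge0 : 0 <= 1 - y by lra. by rewrite /sigmaF_certificate; nonneg_monomials. Qed.

Lemma sigmaE_certificate_ge0 : 0 <= sigmaE_certificate u y.
Proof. have one_sub_y_ge0 : 0 <= 1 - y by lra. by rewrite /sigmaE_certificate; nonneg_monomials. Qed.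

Lemma lambdaI_certificate_ge0 : 0 <= lambdaI_certificate u y.
Proof. have one_sub_y_ge0 : 0 <= 1 - y by lra. by rewrite /lambdaI_certificate; nonneg_monomials. Qed.
End Certificates.

Ltac expand_circle_polynomials :=
  rewrite /circle_norm2 /circle_dot /circle_re /circle_im !sum_Sn !sum_O; cbv beta;
  rewrite ?siems_aE ?siems_bE ?siems_cE //;
  rewrite /siems_a_expanded /siems_b_expanded /siems_c_expanded /plus /=.

Lemma sigmaF_identity g c :
  circle_norm2 (siems_a g) 4 c - 1 = (1 - c) * sigmaF_certificate (g - 7/5) ((1 + c) / 2).
Proof. rewrite /sigmaF_certificate; expand_circle_polynomials; field. Qed.

Lemma sigmaE_identity g c :
  (15 * sigmaE_num g)^2 * circle_norm2 (siems_a g) 4 c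
  - siems_den g ^ 2 * circle_norm2 (siems_c g) 4 c
  = (1 + c) * sigmaE_certificate (g - 7/5) ((1 + c) / 2).
Proof. rewrite /sigmaE_certificate /sigmaE_num /siems_den; expand_circle_polynomials; field. Qed.

Lemma lambdaI_identity g c :
  siems_den g * circle_dot (siems_b g) 5 (siems_a g) 4 c
  - 15 * (2*g - 1)^4 * circle_norm2 (siems_a g) 4 c
  = (1 + c) * lambdaI_certificate (g - 7/5) ((1 + c) / 2).
Proof. rewrite /lambdaI_certificate /siems_den; expand_circle_polynomials; field. Qed.

Lemma siems_den_pos g : 7/5 <= g -> 0 < siems_den g.
Proof.
move=> hg; have u_ge0 : 0 <= g - 7/5 by lra.
have -> : siems_den g = 16 * (5028/125 + ((3316/25) * (g - 7/5) + (807/5) * (g - 7/5)^2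
                                         + 84 * (g - 7/5)^3 + 15 * (g - 7/5)^4)).
  by rewrite /siems_den; field.
have : 0 <= (3316/25) * (g - 7/5) + (807/5) * (g - 7/5)^2 + 84 * (g - 7/5)^3
            + 15 * (g - 7/5)^4 by nonneg_monomials.
lra.
Qed.

Lemma sigmaE_num_pos g : 7/5 <= g -> 0 < sigmaE_num g.
Proof.
move=> hg; have u_ge0 : 0 <= g - 7/5 by lra.
have -> : sigmaE_num g = 70271/625 + ((38072/125) * (g - 7/5)
            + (7464/25) * (g - 7/5)^2 + (608/5) * (g - 7/5)^3 + 16 * (g - 7/5)^4).
  by rewrite /sigmaE_num; field.
have : 0 <= (38072/125) * (g - 7/5) + (7464/25) * (g - 7/5)^2 + (608/5) * (g - 7/5)^3
            + 16 * (g - 7/5)^4 by nonneg_monomials.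
lra.
Qed.

Lemma siems_den_sigmaE g x : 7/5 <= g ->
  siems_den g ^ 2 * (sigmaE g ^ 2 * x) = (15 * sigmaE_num g) ^ 2 * x.
Proof. by move=> hg; rewrite /sigmaE; field; apply/Rgt_not_eq/siems_den_pos. Qed.

Lemma siems_den_lambdaI g x : 7/5 <= g ->
  siems_den g * (lambdaI g * x) = 15 * (2*g - 1)^4 * x.
Proof. by move=> hg; rewrite /lambdaI; field; apply/Rgt_not_eq/siems_den_pos. Qed.

Section UnitCircle.
Variables (g c : R).
Hypotheses (hg : 7/5 <= g) (c_ge_m1 : -1 <= c) (c_le1 : c <= 1).

Let u_ge0 : 0 <= g - 7/5. Proof. lra. Qed.
Let y_ge0 : 0 <= (1 + c) / 2. Proof. lra. Qed.
Let y_le1 : (1 + c) / 2 <= 1. Proof. lra. Qed.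

Lemma norm2_siems_a_ge1 : 1 <= circle_norm2 (siems_a g) 4 c.
Proof.
have := Rmult_le_pos (1 - c) _ ltac:(lra) (sigmaF_certificate_ge0 _ _ u_ge0 y_ge0 y_le1).
have := sigmaF_identity g c.
lra.
Qed.

Lemma norm2_siems_a_gt0 : 0 < circle_norm2 (siems_a g) 4 c.
Proof. by have := norm2_siems_a_ge1; lra. Qed.

Lemma norm2_siems_c_le :
  circle_norm2 (siems_c g) 4 c <= sigmaE g ^ 2 * circle_norm2 (siems_a g) 4 c.
Proof.
apply: (Rmult_le_reg_l (siems_den g ^ 2)); first exact/pow_lt/siems_den_pos.
rewrite siems_den_sigmaE //.
have := Rmult_le_pos (1 + c) _ ltac:(lra) (sigmaE_certificate_ge0 _ _ u_ge0 y_ge0 y_le1).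
have := sigmaE_identity g c.
lra.
Qed.

Lemma lambdaI_le_dot :
  lambdaI g * circle_norm2 (siems_a g) 4 c <= circle_dot (siems_b g) 5 (siems_a g) 4 c.
Proof.
apply: (Rmult_le_reg_l (siems_den g)); first exact: siems_den_pos.
rewrite siems_den_lambdaI //.
have := Rmult_le_pos (1 + c) _ ltac:(lra) (lambdaI_certificate_ge0 _ _ u_ge0 y_ge0 y_le1).
have := lambdaI_identity g c.
lra.
Qed.
End UnitCircle.

Lemma norm2_siems_a_at1 g : circle_norm2 (siems_a g) 4 1 = 1.
Proof. by have := sigmaF_identity g 1; rewrite Rminus_diag Rmult_0_l; lra. Qed.

Lemma norm2_siems_c_at_m1 g : 7/5 <= g ->
  circle_norm2 (siems_c g) 4 (-1) = sigmaE g ^ 2 * circle_norm2 (siems_a g) 4 (-1).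
Proof.
move=> hg; apply: (Rmult_eq_reg_l (siems_den g ^ 2)).
  by rewrite siems_den_sigmaE //; have := sigmaE_identity g (-1); rewrite Rplus_opp_r Rmult_0_l; lra.
exact/pow_nonzero/Rgt_not_eq/siems_den_pos.
Qed.

Lemma dot_siems_b_a_at_m1 g : 7/5 <= g ->
  circle_dot (siems_b g) 5 (siems_a g) 4 (-1) = lambdaI g * circle_norm2 (siems_a g) 4 (-1).
Proof.
move=> hg; apply: (Rmult_eq_reg_l (siems_den g)).
  by rewrite siems_den_lambdaI //; have := lambdaI_identity g (-1); rewrite Rplus_opp_r Rmult_0_l; lra.
exact/Rgt_not_eq/siems_den_pos.
Qed.

Lemma sigmaE_pos g : 7/5 <= g -> 0 < sigmaE g.
Proof.
move=> hg; apply: Rdiv_lt_0_compat; last exact: siems_den_pos.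
by have := sigmaE_num_pos g hg; lra.
Qed.

Lemma a_funE g t : a_fun g t = trig_sum (siems_a g) 4 t. Proof. by []. Qed.
Lemma b_funE g t : b_fun g t = trig_sum (siems_b g) 5 t. Proof. by []. Qed.
Lemma c_funE g t : c_fun g t = trig_sum (siems_c g) 4 t. Proof. by []. Qed.

Lemma Cmod_a_fun_ge1 g t : 7/5 <= g -> 1 <= Cmod (a_fun g t).
Proof.
move=> hg; rewrite a_funE Cmod_trig_sum -sqrt_1.
have [c_ge_m1 c_le1] := COS_bound t.
exact/sqrt_le_1_alt/norm2_siems_a_ge1.
Qed.

Lemma a_fun_neq0 g t : 7/5 <= g -> a_fun g t <> 0%C.
Proof. by move=> hg a0; have := Cmod_a_fun_ge1 g t hg; rewrite a0 Cmod_0; lra. Qed.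

Lemma sigmaF_max g : 7/5 <= g -> is_max_on_circle (fun t => Cmod (/ a_fun g t)%C) 1.
Proof.
move=> hg; split.
  exists 0; split; first by have := PI_RGT_0; lra.
  rewrite Cmod_inv; last exact: a_fun_neq0.
  by rewrite a_funE Cmod_trig_sum cos_0 norm2_siems_a_at1 sqrt_1 Rinv_1.
move=> t _; rewrite Cmod_inv; last exact: a_fun_neq0.
rewrite -Rinv_1.
by apply: Rinv_le_contravar; [lra | exact: Cmod_a_fun_ge1].
Qed.

Lemma Cmod_c_div_a g t : 7/5 <= g ->
  Cmod (c_fun g t / a_fun g t)%C
  = sqrt (circle_norm2 (siems_c g) 4 (cos t) / circle_norm2 (siems_a g) 4 (cos t)).
Proof.
move=> hg; rewrite Cmod_div; last exact: a_fun_neq0.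
rewrite c_funE a_funE !Cmod_trig_sum.
have [c_ge_m1 c_le1] := COS_bound t.
by rewrite sqrt_div_alt //; apply: norm2_siems_a_gt0.
Qed.

Lemma sigmaE_max g : 7/5 <= g ->
  is_max_on_circle (fun t => Cmod (c_fun g t / a_fun g t)%C) (sigmaE g).
Proof.
move=> hg; have sigmaE_ge0 := Rlt_le _ _ (sigmaE_pos g hg).
split.
  exists PI; split; first by have := PI_RGT_0; lra.
  rewrite Cmod_c_div_a // cos_PI norm2_siems_c_at_m1 // /Rdiv Rmult_assoc Rinv_r.
    by rewrite Rmult_1_r sqrt_pow2.
  by apply/Rgt_not_eq/norm2_siems_a_gt0; lra.
move=> t _; rewrite Cmod_c_div_a // -(sqrt_pow2 _ sigmaE_ge0).
have [c_ge_m1 c_le1] := COS_bound t.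
apply/sqrt_le_1_alt/(Rle_div_l _ _ _ (norm2_siems_a_gt0 _ _ hg c_ge_m1 c_le1)).
exact: norm2_siems_c_le.
Qed.

Lemma lambdaI_min g : 7/5 <= g ->
  is_min_on_circle (fun t => Re (b_fun g t / a_fun g t)%C) (lambdaI g).
Proof.
move=> hg; split.
  exists PI; split; first by have := PI_RGT_0; lra.
  rewrite b_funE a_funE Re_div_trig_sum cos_PI dot_siems_b_a_at_m1 //.
  by field; apply/Rgt_not_eq/norm2_siems_a_gt0; lra.
move=> t _; rewrite b_funE a_funE Re_div_trig_sum.
have [c_ge_m1 c_le1] := COS_bound t.
by apply/(Rle_div_r _ _ _ (norm2_siems_a_gt0 _ _ hg c_ge_m1 c_le1))/lambdaI_le_dot.
Qed.

Theorem mainTheorem12 (g : R) (hg : 7/5 <= g) :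
  (forall t, 0 <= t < 2 * PI -> a_fun g t <> 0%C) /\
  is_max_on_circle (fun t => Cmod (/ a_fun g t)%C) 1 /\
  is_max_on_circle (fun t => Cmod (c_fun g t / a_fun g t)%C)
    (15 * (16*g^4 + 32*g^3 - 24*g^2 + 8*g - 1)
       / (16 * (15*g^4 - 15*g^2 + 10*g - 2))) /\
  is_min_on_circle (fun t => Re (b_fun g t / a_fun g t)%C)
    (15 * (2*g - 1)^4 / (16 * (15*g^4 - 15*g^2 + 10*g - 2))) /\
  (15 * (2*g - 1)^4 / (16 * (15*g^4 - 15*g^2 + 10*g - 2)))
    / (15 * (16*g^4 + 32*g^3 - 24*g^2 + 8*g - 1)
         / (16 * (15*g^4 - 15*g^2 + 10*g - 2)))
  = (2*g - 1)^4 / (16*g^4 + 32*g^3 - 24*g^2 + 8*g - 1).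
Proof.
split; first by move=> t _; exact: a_fun_neq0.
split; first exact: sigmaF_max.
split; first exact: sigmaE_max.
split; first exact: lambdaI_min.
have := siems_den_pos g hg; have := sigmaE_num_pos g hg; rewrite /sigmaE_num /siems_den.
by move=> N_pos D_pos; field; split; lra.
Qed.
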